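(* Let $(\Omega,\mathcal F)$ be a measurable space with $\Sigma\neq\emptyset$, $\nu$ a finite measure, and $\mu$ a finite measure with $\mu\ll\nu$. Let $F_\mu(y)=\nu(\{\omega:\frac{d\mu}{d\nu}(\omega)\le y\})$ and $v_\mu(A)=\int_0^\infty\min(\nu(\Omega)-F_\mu(z),\nu(A))\,dz$. For a non-negative measurable $f:\Omega\to[0,\infty)$ let $F_f(z)=\nu(\{\omega:f(\omega)\le z\})$ ($z\ge0$). Then $$v_\mu(f)=\int_0^{\nu(\Omega)}F_\mu^{-1}(\beta)\,F_f^{-1}(\beta)\,d\beta,$$ where $v_\mu(f)=\int_0^\infty v_\mu(\{\omega:f(\omega)>z\})\,dz$ and, for $F\in\{F_\mu,F_f\}$, $F^{-1}(\beta)=\inf\{z\ge0:F(z)>\beta\}$.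
   Context: $\Sigma$ denotes the set of all classes $\mathcal I\subset\mathcal F$ that are chains (totally ordered by inclusion), contain $\emptyset$ and $\Omega$, and generate $\mathcal F$ as a $\sigma$-algebra. $\frac{d\mu}{d\nu}$ is the non-negative Radon–Nikodym derivative. *)

From HB Require Import structures.
From mathcomp Require Import all_boot all_order all_algebra.
From mathcomp Require Import all_classical all_reals all_analysis.
Set Implicit Arguments. Unset Strict Implicit. Unset Printing Implicit Defensive.
Import Order.TTheory GRing.Theory Num.Theory.
Local Open Scope classical_set_scope.
Local Open Scope ring_scope.

Definition Sigma_classes {d} {T : measurableType d} : set (set (set T)) :=
  [set I | [/\ I `<=` measurable,
            (forall A B, I A -> I B -> A `<=` B \/ B `<=` A),
            I set0, I setT &
            <<s I >> = @measurable d T]].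

(* generalised inverse: F^{-1}(b) = inf { z >= 0 | F z > b } (inf of the
   empty set is +oo) *)
Definition gen_inv {R : realType} (F : R -> \bar R) (b : R) : \bar R :=
  ereal_inf (EFin @` [set z : R | 0 <= z /\ (b%:E < F z)%E]).

Definition F_mu {d} {T : measurableType d} {R : realType}
  (nu : {finite_measure set T -> \bar R}) (mu : {finite_measure set T -> \bar R})
  (y : R) : \bar R :=
  nu [set w | (Radon_Nikodym (charge_of_finite_measure mu) nu w <= y%:E)%E].

Definition F_fun {d} {T : measurableType d} {R : realType}
  (nu : {finite_measure set T -> \bar R}) (f : T -> R) (z : R) : \bar R :=
  nu [set w | f w <= z].

Definition v_mu {d} {T : measurableType d} {R : realType}
  (nu : {finite_measure set T -> \bar R}) (mu : {finite_measure set T -> \bar R})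
  (A : set T) : \bar R :=
  (\int[@lebesgue_measure R]_(z in `[0%R, +oo[)
     Order.min (nu setT - F_mu nu mu z) (nu A))%E.

Definition v_mu_fun {d} {T : measurableType d} {R : realType}
  (nu : {finite_measure set T -> \bar R}) (mu : {finite_measure set T -> \bar R})
  (f : T -> R) : \bar R :=
  (\int[@lebesgue_measure R]_(z in `[0%R, +oo[)
     v_mu nu mu [set w | (z < f w)%R])%E.

From HB Require Import structures.
From mathcomp Require Import all_boot all_order all_algebra.
From mathcomp Require Import all_classical all_reals all_analysis.
From mathcomp Require Import measurable_realfun.
Set Implicit Arguments. Unset Strict Implicit. Unset Printing Implicit Defensive.
Import Order.TTheory GRing.Theory Num.Theory.
Local Open Scope classical_set_scope.
Local Open Scope ring_scope.

(* For a nondecreasing F with values in [0, n], F^{-1}(b) is the Lebesgue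
   measure of {z >= 0 | F z <= b}, and min (n - x, n - y) is the measure of
   {b in [0, n] | x <= b and y <= b}.  Since nu {f > t} = n - F_f t, v_mu(f)
   is thus the triple integral over (t, z, b) of the indicator of
   {F_mu z <= b} times that of {F_f t <= b}; integrating first in z and then
   in t (Tonelli) yields the integral of F_mu^{-1}(b) F_f^{-1}(b). *)

Section fubini_tonelli_in.
Local Open Scope ereal_scope.
Context d1 d2 (T1 : measurableType d1) (T2 : measurableType d2) (R : realType).
Variables (m1 : {sigma_finite_measure set T1 -> \bar R})
          (m2 : {sigma_finite_measure set T2 -> \bar R}).
Variables (A : set T1) (f : T1 * T2 -> \bar R).
Hypotheses (mA : measurable A) (mf : measurable_fun setT f)
           (f0 : forall p, 0 <= f p).

Let measurable_restrictX (B : set T2) : measurable B ->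
  measurable_fun setT (f \_ (A `*` B)).
Proof.
move=> mB; apply/(measurable_restrictT _ _).1; first exact: measurableX.
exact: measurable_funS mf.
Qed.

Let restrictX_ge0 (B : set T2) p : 0 <= (f \_ (A `*` B)) p.
Proof. by rewrite /patch; case: ifP. Qed.

Lemma measurable_fun_integral_in :
  measurable_fun setT (fun y => \int[m1]_(x in A) f (x, y)).
Proof.
have -> : (fun y => \int[m1]_(x in A) f (x, y)) =
    fubini_G m1 (f \_ (A `*` setT)).
  apply/funext => y; rewrite integral_mkcond; apply: eq_integral => x _.
  by rewrite /patch in_setX in_setT andbT.
apply: measurable_fun_fubini_tonelli_G; last exact: restrictX_ge0.
exact: measurable_restrictX.
Qed.

Lemma fubini_tonelli_in (B : set T2) : measurable B ->
  \int[m1]_(x in A) \int[m2]_(y in B) f (x, y) =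
  \int[m2]_(y in B) \int[m1]_(x in A) f (x, y).
Proof.
move=> mB; rewrite integral_mkcond [RHS]integral_mkcond.
transitivity (\int[m1]_x \int[m2]_y (f \_ (A `*` B)) (x, y)).
  apply: eq_integral => x _; rewrite /patch; case: ifPn => xA.
    rewrite integral_mkcond; apply: eq_integral => y _.
    by rewrite /patch in_setX xA.
  by apply/esym/integral0_eq => y _; rewrite /patch in_setX (negbTE xA).
rewrite fubini_tonelli; last exact: restrictX_ge0.
  apply: eq_integral => y _; rewrite /patch; case: ifPn => yB.
    rewrite [RHS]integral_mkcond; apply: eq_integral => x _.
    by rewrite /patch in_setX yB andbT.
  by apply: integral0_eq => x _; rewrite /patch in_setX (negbTE yB) andbF.
exact: measurable_restrictX.
Qed.

End fubini_tonelli_in.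

Section generalized_inverse.
Local Open Scope ereal_scope.
Context {R : realType}.
Local Notation leb := (@lebesgue_measure R).
Implicit Types (F G : R -> \bar R).

Definition epigraph F : set (R * R) := [set p | F p.1 <= p.2%:E].

Lemma measurable_epigraph F : measurable_fun setT F -> measurable (epigraph F).
Proof.
move=> mF; rewrite -(setTI (epigraph F)); apply: measurable_lee => //.
- exact: measurableT_comp mF measurable_fst.
- by apply/measurable_EFinP; exact: measurable_snd.
Qed.

Lemma measurable_indic_epigraph F : measurable_fun setT F ->
  measurable_fun setT (fun p => (\1_(epigraph F) p : R)%:E).
Proof.
move=> mF; apply/measurable_EFinP; apply: measurable_indic.
exact: measurable_epigraph.
Qed.

Lemma gen_inv_ge0 F (b : R) : 0 <= gen_inv F b.
Proof. by apply: le_ereal_inf_tmp => _ [z [z0 _] <-]; rewrite lee_fin. Qed.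

Lemma nondecreasing_fin_num_measurable F :
  {homo F : x y / (x <= y)%R >-> x <= y} -> (forall z, F z \is a fin_num) ->
  measurable_fun setT F.
Proof.
move=> ndF Ffin; have -> : F = EFin \o (fine \o F).
  by apply/funext => z; rewrite /= fineK ?Ffin.
apply/measurable_EFinP; apply: nondecreasing_measurable => // x y xy.
by rewrite /= fine_le// ndF.
Qed.

Lemma lebesgue_measure_sandwich (A : set R) (a r : R) : (a <= r)%R ->
  measurable A -> `[a, r[ `<=` A -> A `<=` `[a, r] -> leb A = (r - a)%:E.
Proof.
move=> ar mA rA Ar.
have leb_itv b : leb [set` Interval (BLeft a) (BSide b r)] = (r - a)%:E.
  rewrite lebesgue_measure_itv/= lte_fin -EFinD; case: ltP => //.
  by move=> ra; rewrite (@le_anti _ _ r a) ?ra ?ar// subrr.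
apply/le_anti/andP; split.
- by rewrite -(leb_itv false) le_measure ?inE.
- by rewrite -(leb_itv true) le_measure ?inE.
Qed.

Lemma gen_inv_integral_epigraph F (b : R) :
  {homo F : x y / (x <= y)%R >-> x <= y} -> measurable_fun setT F ->
  gen_inv F b = \int[leb]_(z in `[0%R, +oo[) (\1_(epigraph F) (z, b))%:E.
Proof.
move=> ndF mF; set L := [set z | F z <= b%:E].
have mL : measurable L.
  by rewrite -(setTI L); apply: measurable_lee.
transitivity (leb (L `&` `[0%R, +oo[)); last by rewrite -integral_indic.
rewrite /gen_inv.
set S := (X in ereal_inf (EFin @` X)).
have [S0|/set0P[s Ss]] := eqVneq S set0.
  have -> : L `&` `[0%R, +oo[ = `[0%R, +oo[%classic.
    apply/setIidr => z z0; rewrite /L/= leNgt; apply/negP => bFz.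
    suff : S z by rewrite S0.
    by split => //; move: z0; rewrite /= in_itv/= andbT.
  by rewrite S0 image_set0 ereal_inf0 lebesgue_measure_itv/= ltry.
have inf_ge0 : 0 <= ereal_inf (EFin @` S) := gen_inv_ge0 F b.
have inf_fin : ereal_inf (EFin @` S) \is a fin_num.
  rewrite ge0_fin_numE// (@le_lt_trans _ _ s%:E) ?ltry//.
  by apply: ereal_inf_lbound; exists s.
rewrite -(fineK inf_fin) in inf_ge0 *; set r := fine _.
(* S is up-closed in [0, +oo[ by monotonicity of F, and L is its complement
   there, so L `&` [0, +oo[ lies between [0, r[ and [0, r]. *)
rewrite -[r]subr0; apply/esym/lebesgue_measure_sandwich.
- by move: inf_ge0; rewrite lee_fin.
- exact: measurableI.
- move=> z /=; rewrite in_itv/= => /andP[z0 zr].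
  split; last by rewrite /= in_itv/= z0.
  rewrite /L/= leNgt; apply/negP => bFz.
  have : ereal_inf (EFin @` S) <= z%:E by apply: ereal_inf_lbound; exists z.
  by rewrite -(fineK inf_fin) lee_fin leNgt zr.
- move=> z [/= Fzb]; rewrite /= !in_itv/= !andbT => z0; rewrite z0 leNgt/=.
  apply/negP => rz; have : ereal_inf (EFin @` S) < z%:E.
    by rewrite -(fineK inf_fin) lte_fin.
  move=> /ereal_inf_lt[_ [y [_ bFy] <-]]; rewrite lte_fin => /ltW/ndF Fyz.
  by have := lt_le_trans bFy (le_trans Fyz Fzb); rewrite ltxx.
Qed.

Lemma measurable_gen_inv F :
  {homo F : x y / (x <= y)%R >-> x <= y} -> measurable_fun setT F ->
  measurable_fun setT (gen_inv F).
Proof.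
move=> ndF mF; rewrite (_ : gen_inv F = fun b => \int[leb]_(z in `[0%R, +oo[)
    (\1_(epigraph F) (z, b))%:E); last first.
  by apply/funext => b; exact: gen_inv_integral_epigraph.
apply: (measurable_fun_integral_in leb
  (f := fun p => (\1_(epigraph F) p)%:E)) => //.
exact: measurable_indic_epigraph.
Qed.

Lemma indic_epigraph F (z x b : R) : F z = x%:E ->
  \1_(epigraph F) (z, b) = \1_`[x, +oo[ b :> R.
Proof.
move=> Fz; rewrite !indicE; congr ((nat_of_bool _)%:R).
apply/idP/idP => /set_mem.
- rewrite /epigraph/= Fz lee_fin => xb.
  by apply/mem_set; rewrite /= in_itv/= xb.
- rewrite /= in_itv/= andbT => xb.
  by apply/mem_set; rewrite /epigraph/= Fz lee_fin.
Qed.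

Lemma integral_indic_epigraphM (n : R) F G (z t : R) :
  0 <= F z <= n%:E -> 0 <= G t <= n%:E ->
  \int[leb]_(b in `[0%R, n])
     ((\1_(epigraph F) (z, b))%:E * (\1_(epigraph G) (t, b))%:E) =
  Order.min (n%:E - F z) (n%:E - G t).
Proof.
have real_between (X : \bar R) : 0 <= X <= n%:E ->
    exists2 x : R, X = x%:E & (0 <= x <= n)%R.
  move=> /andP[X0 Xn]; have Xfin : X \is a fin_num.
    by rewrite ge0_fin_numE// (le_lt_trans Xn) ?ltry.
  by exists (fine X); rewrite ?fineK// -!lee_fin fineK// X0.
move=> /real_between[x Fz /andP[x0 xn]] /real_between[y Gt /andP[y0 yn]].
transitivity (leb (`[x, +oo[ `&` `[y, +oo[ `&` `[0%R, n])).
  rewrite -integral_indic//; last exact: measurableI.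
  apply: eq_integral => b _.
  by rewrite (indic_epigraph _ Fz) (indic_epigraph _ Gt) -EFinM indicI.
rewrite Fz Gt -!EFinB -EFin_min -real_addr_minr ?num_real// -oppr_max.
apply: lebesgue_measure_sandwich; first by rewrite ge_max xn yn.
- by apply: measurableI; [exact: measurableI|].
- move=> b; rewrite /= !in_itv/= ge_max => /andP[/andP[xb yb] bn].
  by rewrite xb yb (le_trans x0 xb) ltW.
- move=> b [[]]; rewrite /= !in_itv/= !andbT => xb yb /andP[_ bn].
  by rewrite ge_max xb yb.
Qed.

Lemma integral_min_gen_inv (n : R) F G :
  {homo F : x y / (x <= y)%R >-> x <= y} -> (forall z, 0 <= F z <= n%:E) ->
  {homo G : x y / (x <= y)%R >-> x <= y} -> (forall t, 0 <= G t <= n%:E) ->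
  \int[leb]_(t in `[0%R, +oo[) \int[leb]_(z in `[0%R, +oo[)
     Order.min (n%:E - F z) (n%:E - G t) =
  \int[leb]_(b in `[0%R, n]) (gen_inv F b * gen_inv G b).
Proof.
have bounded_measurable (H : R -> \bar R) :
    {homo H : x y / (x <= y)%R >-> x <= y} ->
    (forall z, 0 <= H z <= n%:E) -> measurable_fun setT H.
  move=> ndH H0n; apply: nondecreasing_fin_num_measurable => // z.
  by have /andP[H0 Hn] := H0n z; rewrite ge0_fin_numE// (le_lt_trans Hn) ?ltry.
move=> ndF F0n ndG G0n.
have mF := bounded_measurable _ ndF F0n.
have mG := bounded_measurable _ ndG G0n.
pose I H p : \bar R := (\1_(epigraph H) p)%:E.
have mI (H : R -> \bar R) : measurable_fun setT H -> measurable_fun setT (I H).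
  exact: measurable_indic_epigraph.
have I0 (H : R -> \bar R) p : 0 <= I H p by rewrite lee_fin.
transitivity (\int[leb]_(t in `[0%R, +oo[) \int[leb]_(z in `[0%R, +oo[)
    \int[leb]_(b in `[0%R, n]) (I F (z, b) * I G (t, b))).
  by apply: eq_integral => t _; apply: eq_integral => z _;
    rewrite integral_indic_epigraphM.
transitivity (\int[leb]_(t in `[0%R, +oo[) \int[leb]_(b in `[0%R, n])
    \int[leb]_(z in `[0%R, +oo[) (I F (z, b) * I G (t, b))).
  apply: eq_integral => t _.
  apply: (fubini_tonelli_in leb leb (f := fun p => I F p * I G (t, p.2))) => //.
  - apply: emeasurable_funM; first exact: mI.
    apply: measurableT_comp (mI _ mG) _.
    exact: measurable_fun_pair (measurable_cst t) measurable_snd.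
  - by move=> p; rewrite mule_ge0.
transitivity (\int[leb]_(t in `[0%R, +oo[) \int[leb]_(b in `[0%R, n])
    (gen_inv F b * I G (t, b))).
  apply: eq_integral => t _; apply: eq_integral => b _.
  rewrite ge0_integralZr ?gen_inv_ge0//.
    by congr (_ * _); rewrite gen_inv_integral_epigraph.
  apply: measurable_funTS.
  exact: measurableT_comp (mI _ mF) (pair2_measurable b).
rewrite (fubini_tonelli_in leb leb (f := fun p => gen_inv F p.2 * I G p))//.
- apply: eq_integral => b _ /=; rewrite ge0_integralZl ?gen_inv_ge0//.
    by congr (_ * _); rewrite gen_inv_integral_epigraph.
  apply: measurable_funTS.
  exact: measurableT_comp (mI _ mG) (pair2_measurable b).
- apply: emeasurable_funM; last exact: mI.
  exact: measurableT_comp (measurable_gen_inv ndF mF) measurable_snd.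
- by move=> p; rewrite mule_ge0 ?gen_inv_ge0.
Qed.

End generalized_inverse.

Theorem proposition17 (d : measure_display) (T : measurableType d) (R : realType)
  (nu : {finite_measure set T -> \bar R})
  (mu : {finite_measure set T -> \bar R})
  (f : T -> R) :
  @Sigma_classes d T !=set0 ->
  charge_of_finite_measure mu `<< nu ->
  measurable_fun setT f ->
  (forall w, 0 <= f w) ->
  v_mu_fun nu mu f =
  (\int[@lebesgue_measure R]_(b in `[0%R, fine (nu setT)])
     (gen_inv (F_mu nu mu) b * gen_inv (F_fun nu f) b))%E.
Proof.
(* Neither Sigma nor the sign of f matters: the t-integral only runs over
   [0, +oo[, and absolute continuity only serves to make d mu / d nu
   measurable. *)
move=> _ mu_ac mf _.
set n := fine (nu setT).
have nuT : nu setT = n%:E by rewrite fineK ?fin_num_measure.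
have nu_bounds A : measurable A -> (0 <= nu A <= n%:E)%E.
  by move=> mA; rewrite measure_ge0 -nuT le_measure ?inE.
set dmu := Radon_Nikodym (charge_of_finite_measure mu) nu.
have mdmu : measurable_fun setT dmu.
  exact: measurable_int (Radon_Nikodym_integrable mu_ac).
have mdmu_le z : measurable [set w | (dmu w <= z%:E)%E].
  by rewrite -(setTI [set w | _]); apply: measurable_lee.
have mf_le z : measurable [set w | f w <= z].
  by rewrite -preimage_itvNyc -(setTI (_ @^-1` _)); exact: mf.
have nu_gt t : nu [set w | t < f w] = (n%:E - F_fun nu f t)%E.
  rewrite (_ : [set w | t < f w] = setT `\` [set w | f w <= t]); last first.
    by apply/seteqP; split => w /=; rewrite ltNge; [move/negP|case=> _ /negP].
  rewrite measureD ?setTI//; first by congr (_ + _); exact: nuT.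
  by rewrite -ge0_fin_numE// fin_num_measure.
rewrite /v_mu_fun /v_mu nuT.
under eq_integral => t _ do under eq_integral => z _ do rewrite nu_gt.
apply: (@integral_min_gen_inv R n (F_mu nu mu) (F_fun nu f)).
- move=> x y xy; apply: le_measure; rewrite ?inE// => w /= /le_trans; apply.
  by rewrite lee_fin.
- by move=> z; exact: nu_bounds.
- by move=> x y xy; apply: le_measure; rewrite ?inE// => w /= /le_trans; apply.
- by move=> t; exact: nu_bounds.
Qed.
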